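(* Let $\omega$ be a Hölder-like modulus of continuity and $(\mathcal{X},d_{\mathcal{X}})$ a metric space. Then $d^\omega_{\mathcal{X}}:=\omega\circ d_{\mathcal{X}}$ is a metric on $\mathcal{X}$, and the identity map $(\mathcal{X},d_{\mathcal{X}})\to(\mathcal{X},d^\omega_{\mathcal{X}})$ is quasisymmetric. Furthermore, if $K\subseteq\mathcal{X}$ is $d_{\mathcal{X}}$-doubling then it is also $d^\omega_{\mathcal{X}}$-doubling.
   Context: A Hölder-like modulus of continuity is a function $\omega:[0,\infty)\to[0,\infty)$ with $\omega(0)=0$ that is strictly increasing, subadditive and continuous, for which there is an increasing homeomorphism $h_\omega:[0,\infty)\to[0,\infty)$ with $\omega(st)\le h_\omega(s)\omega(t)$ for all $s,t\ge0$. A topological embedding $\varphi:(\mathcal{X},d_{\mathcal{X}})\to(\mathcal{Y},d_{\mathcal{Y}})$ is quasisymmetric if there is a strictly increasing surjection $\eta:[0,\infty)\to[0,\infty)$ such that $d_{\mathcal{X}}(x_1,x_2)\le t\,d_{\mathcal{X}}(x_1,x_3)$ implies $d_{\mathcal{Y}}(\varphi(x_1),\varphi(x_2))\le\eta(t)d_{\mathcal{Y}}(\varphi(x_1),\varphi(x_3))$. A (subset of a) metric space is doubling if there is a finite number $C$ such that every ball of radius $2r$ can be covered by $C$ balls of radius $r$. *)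

From Stdlib Require Import Reals Lra List.
Open Scope R_scope.

Definition is_metric {X : Type} (d : X -> X -> R) : Prop :=
  (forall x y, 0 <= d x y) /\
  (forall x y, d x y = 0 <-> x = y) /\
  (forall x y, d x y = d y x) /\
  (forall x y z, d x z <= d x y + d y z).

Definition cont_on_nonneg (f : R -> R) : Prop :=
  forall x, 0 <= x -> forall eps, 0 < eps -> exists delta, 0 < delta /\
    forall y, 0 <= y -> Rabs (y - x) < delta -> Rabs (f y - f x) < eps.

Definition maps_nonneg (f : R -> R) : Prop := forall x, 0 <= x -> 0 <= f x.

Definition strictly_increasing_nonneg (f : R -> R) : Prop :=
  forall x y, 0 <= x -> x < y -> f x < f y.

Definition surjective_nonneg (f : R -> R) : Prop :=
  forall y, 0 <= y -> exists x, 0 <= x /\ f x = y.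

Definition increasing_homeomorphism (h : R -> R) : Prop :=
  maps_nonneg h /\
  (forall x y, 0 <= x -> x <= y -> h x <= h y) /\
  cont_on_nonneg h /\
  exists g : R -> R, maps_nonneg g /\ cont_on_nonneg g /\
    (forall x, 0 <= x -> g (h x) = x) /\ (forall y, 0 <= y -> h (g y) = y).

Definition holder_like_modulus (w : R -> R) : Prop :=
  w 0 = 0 /\ maps_nonneg w /\
  strictly_increasing_nonneg w /\
  (forall s t, 0 <= s -> 0 <= t -> w (s + t) <= w s + w t) /\
  cont_on_nonneg w /\
  exists h : R -> R, increasing_homeomorphism h /\
    forall s t, 0 <= s -> 0 <= t -> w (s * t) <= h s * w t.

Definition topological_embedding {X Y : Type} (dX : X -> X -> R)
    (dY : Y -> Y -> R) (phi : X -> Y) : Prop :=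
  (forall x x', phi x = phi x' -> x = x') /\
  (forall x eps, 0 < eps -> exists delta, 0 < delta /\
     forall x', dX x x' < delta -> dY (phi x) (phi x') < eps) /\
  (forall x eps, 0 < eps -> exists delta, 0 < delta /\
     forall x', dY (phi x) (phi x') < delta -> dX x x' < eps).

Definition quasisymmetric {X Y : Type} (dX : X -> X -> R)
    (dY : Y -> Y -> R) (phi : X -> Y) : Prop :=
  topological_embedding dX dY phi /\
  exists eta : R -> R, strictly_increasing_nonneg eta /\ maps_nonneg eta /\
    surjective_nonneg eta /\
    forall x1 x2 x3 t, 0 <= t -> dX x1 x2 <= t * dX x1 x3 ->
      dY (phi x1) (phi x2) <= eta t * dY (phi x1) (phi x3).

Definition doubling {X : Type} (d : X -> X -> R) (K : X -> Prop) : Prop :=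
  exists C : nat, forall x r, K x -> 0 < r ->
    exists cs : list X, (length cs <= C)%nat /\ (forall c, In c cs -> K c) /\
      forall y, K y -> d x y < 2 * r -> exists c, In c cs /\ d c y < r.

From Stdlib Require Import Reals Lra Lia List.
Open Scope R_scope.

(* Since w is increasing and subadditive with w 0 = 0, w o d is again a
   metric, and the bound w (s t) <= h s * w t makes the identity
   quasisymmetric with eta = h.  For doubling, the same bound gives M with
   4 w t <= w (M t), while continuity at 0 and subadditivity give, for every
   r > 0, a radius b with r/2 < w b <= r.  Hence the (w o d)-ball of radius 2r
   lies in the d-ball of radius M b <= 2^k b, which is covered by C^k d-balls
   of radius b, each inside a (w o d)-ball of radius r. *)

Lemma pow2_unbounded (M : R) : exists k : nat, M < 2 ^ k.
Proof.
  destruct (INR_archimed 1 M) as [k Hk]; [lra|].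
  exists k. pose proof (poly k 1 Rlt_0_1) as Hpow.
  replace (1 + 1) with 2 in Hpow by ring. lra.
Qed.

Lemma cont_on_nonneg_small_near_0 (f : R -> R) :
  cont_on_nonneg f -> f 0 = 0 -> maps_nonneg f ->
  forall eps, 0 < eps ->
  exists delta, 0 < delta /\ forall t, 0 <= t -> t < delta -> f t < eps.
Proof.
  intros f_cont f_0 f_nonneg eps eps_pos.
  destruct (f_cont 0 (Rle_refl 0) eps eps_pos) as [delta [delta_pos f_near]].
  exists delta. split; [exact delta_pos|]. intros t t_nonneg t_lt.
  specialize (f_near t t_nonneg). specialize (f_nonneg t t_nonneg).
  rewrite f_0, !Rminus_0_r, !Rabs_right in f_near by lra.
  exact (f_near t_lt).
Qed.

Definition covers {X : Type} (d : X -> X -> R) (K : X -> Prop) (cs : list X)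
    (x : X) (s r : R) : Prop :=
  (forall c, In c cs -> K c) /\
  forall y, K y -> d x y < s -> exists c, In c cs /\ d c y < r.

Lemma covers_union {X : Type} (d : X -> X -> R) (K : X -> Prop) (m : nat) (s r : R) :
  (forall a, K a -> exists cs, (length cs <= m)%nat /\ covers d K cs a s r) ->
  forall l : list X, (forall a, In a l -> K a) ->
  exists ds, (length ds <= length l * m)%nat /\ (forall c, In c ds -> K c) /\
    forall y, K y -> (exists a, In a l /\ d a y < s) -> exists c, In c ds /\ d c y < r.
Proof.
  intros cover_each. induction l as [|a l IH]; intros l_K.
  - exists nil. split; [simpl; lia|]. split; [intros c []|].
    intros y _ [a [[] _]].
  - destruct IH as [ds [ds_len [ds_K ds_cov]]]; [intros c c_in; apply l_K; right; exact c_in|].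
    destruct (cover_each a (l_K a (or_introl eq_refl))) as [es [es_len [es_K es_cov]]].
    exists (es ++ ds). split; [rewrite length_app; simpl; lia|]. split.
    + intros c c_in. apply in_app_or in c_in. destruct c_in; auto.
    + intros y Ky [c [[<-|c_in] dcy]].
      * destruct (es_cov y Ky dcy) as [e [e_in dey]].
        exists e. split; [apply in_or_app; left; exact e_in|exact dey].
      * destruct (ds_cov y Ky (ex_intro _ c (conj c_in dcy))) as [e [e_in dey]].
        exists e. split; [apply in_or_app; right; exact e_in|exact dey].
Qed.

Section DoublingIteration.
Variables (X : Type) (d : X -> X -> R) (K : X -> Prop) (C : nat).
Hypothesis cover_double : forall x r, K x -> 0 < r ->
  exists cs, (length cs <= C)%nat /\ covers d K cs x (2 * r) r.

Lemma doubling_iter (k : nat) : forall x r, K x -> 0 < r ->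
  exists cs, (length cs <= C ^ k)%nat /\ covers d K cs x (2 ^ k * r) r.
Proof.
  induction k as [|k IH]; intros x r Kx r_pos.
  - exists (x :: nil). split; [simpl; lia|]. split.
    + intros c [<-|[]]. exact Kx.
    + intros y _ dxy. exists x. split; [left; reflexivity|simpl in dxy; lra].
  - assert (rk_pos : 0 < 2 ^ k * r) by (apply Rmult_lt_0_compat; [apply pow_lt|]; lra).
    destruct (cover_double x (2 ^ k * r) Kx rk_pos) as [cs [cs_len [cs_K cs_cov]]].
    destruct (covers_union d K (C ^ k) (2 ^ k * r) r (fun a Ka => IH a r Ka r_pos) cs cs_K)
      as [ds [ds_len [ds_K ds_cov]]].
    exists ds. split.
    + simpl. eapply Nat.le_trans; [exact ds_len|]. apply Nat.mul_le_mono_r. exact cs_len.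
    + split; [exact ds_K|]. intros y Ky dxy.
      apply ds_cov; [exact Ky|]. apply cs_cov; [exact Ky|]. simpl in dxy. lra.
Qed.

End DoublingIteration.

Section IncreasingHomeomorphism.
Variable h : R -> R.
Hypothesis h_homeo : increasing_homeomorphism h.

Lemma increasing_homeomorphism_0 : h 0 = 0.
Proof.
  destruct h_homeo as [h_nonneg [h_mono [_ [g [g_nonneg [_ [_ hg]]]]]]].
  pose proof (h_mono 0 (g 0) (Rle_refl 0) (g_nonneg 0 (Rle_refl 0))) as h_le.
  rewrite hg in h_le by lra. pose proof (h_nonneg 0 (Rle_refl 0)). lra.
Qed.

Lemma increasing_homeomorphism_strict : strictly_increasing_nonneg h.
Proof.
  destruct h_homeo as [_ [h_mono [_ [g [_ [_ [gh _]]]]]]].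
  intros x y x_nonneg x_lt_y.
  destruct (Rle_lt_or_eq_dec _ _ (h_mono x y x_nonneg (Rlt_le _ _ x_lt_y))) as [lt|eq];
    [exact lt|].
  apply (f_equal g) in eq. rewrite !gh in eq by lra. lra.
Qed.

Lemma increasing_homeomorphism_surjective : surjective_nonneg h.
Proof.
  destruct h_homeo as [_ [_ [_ [g [g_nonneg [_ [_ hg]]]]]]].
  intros y y_nonneg. exists (g y). split; [apply g_nonneg|apply hg]; exact y_nonneg.
Qed.

End IncreasingHomeomorphism.

Section Modulus.
Variable w : R -> R.
Hypothesis w_0 : w 0 = 0.
Hypothesis w_strict : strictly_increasing_nonneg w.
Hypothesis w_subadd : forall s t, 0 <= s -> 0 <= t -> w (s + t) <= w s + w t.
Hypothesis w_cont : cont_on_nonneg w.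

Lemma modulus_le x y : 0 <= x -> x <= y -> w x <= w y.
Proof.
  intros x_nonneg x_le_y. destruct (Rle_lt_or_eq_dec _ _ x_le_y) as [lt|<-].
  - left. exact (w_strict x y x_nonneg lt).
  - apply Rle_refl.
Qed.

Lemma modulus_nonneg : maps_nonneg w.
Proof. intros x x_nonneg. rewrite <- w_0. exact (modulus_le 0 x (Rle_refl 0) x_nonneg). Qed.

Lemma modulus_pos x : 0 < x -> 0 < w x.
Proof. intros x_pos. rewrite <- w_0. apply w_strict; lra. Qed.

Lemma is_metric_modulus_comp (X : Type) (d : X -> X -> R) :
  is_metric d -> is_metric (fun x y => w (d x y)).
Proof.
  intros [d_nonneg [d_eq0 [d_sym d_tri]]].
  split; [|split; [|split]].
  - intros x y. exact (modulus_nonneg _ (d_nonneg x y)).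
  - intros x y. split.
    + intros w_eq0. apply d_eq0.
      destruct (Rle_lt_or_eq_dec _ _ (d_nonneg x y)) as [d_pos|d_eq]; [|auto].
      apply modulus_pos in d_pos. lra.
    + intros <-. destruct (d_eq0 x x) as [_ d_xx]. rewrite d_xx by reflexivity. exact w_0.
  - intros x y. rewrite d_sym. reflexivity.
  - intros x y z. eapply Rle_trans.
    + exact (modulus_le _ _ (d_nonneg x z) (d_tri x y z)).
    + apply w_subadd; apply d_nonneg.
Qed.

Lemma topological_embedding_modulus_id (X : Type) (d : X -> X -> R) :
  (forall x y, 0 <= d x y) ->
  topological_embedding d (fun x y => w (d x y)) (fun x : X => x).
Proof.
  intros d_nonneg. split; [|split].
  - intros x x' eq. exact eq.
  - intros x eps eps_pos.
    destruct (cont_on_nonneg_small_near_0 w w_cont w_0 modulus_nonneg eps eps_pos)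
      as [delta [delta_pos w_small]].
    exists delta. split; [exact delta_pos|]. intros x' dxx'. exact (w_small _ (d_nonneg x x') dxx').
  - intros x eps eps_pos. exists (w eps). split; [exact (modulus_pos eps eps_pos)|].
    intros x' w_lt. destruct (Rlt_or_le (d x x') eps) as [lt|ge]; [exact lt|].
    pose proof (modulus_le eps (d x x') (Rlt_le _ _ eps_pos) ge). lra.
Qed.

Lemma modulus_level_by_halving (r : R) (N : nat) : forall T, 0 < T -> r < w T ->
  w (T / 2 ^ N) <= r -> exists b, 0 < b /\ r / 2 < w b /\ w b <= r.
Proof.
  induction N as [|N IH]; intros T T_pos r_lt w_le.
  - simpl in w_le. rewrite Rdiv_1_r in w_le. lra.
  - assert (w_split := w_subadd (T / 2) (T / 2) ltac:(lra) ltac:(lra)).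
    replace (T / 2 + T / 2) with T in w_split by field.
    destruct (Rle_or_lt (w (T / 2)) r) as [half_le|half_gt].
    + exists (T / 2). split; [lra|]. split; [lra|exact half_le].
    + apply (IH (T / 2)); [lra|exact half_gt|].
      pose proof (pow_lt 2 N ltac:(lra)).
      replace (T / 2 / 2 ^ N) with (T / 2 ^ S N) by (simpl; field; lra).
      exact w_le.
Qed.

Lemma modulus_level (r : R) : 0 < r -> (exists T, 0 < T /\ r < w T) ->
  exists b, 0 < b /\ r / 2 < w b /\ w b <= r.
Proof.
  intros r_pos [T [T_pos r_lt]].
  destruct (cont_on_nonneg_small_near_0 w w_cont w_0 modulus_nonneg r r_pos)
    as [delta [delta_pos w_small]].
  destruct (pow2_unbounded (T / delta)) as [N N_big].
  pose proof (pow_lt 2 N ltac:(lra)) as pow_pos.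
  assert (T_lt : T < 2 ^ N * delta).
  { replace T with (T / delta * delta) at 1 by (field; lra).
    apply Rmult_lt_compat_r; assumption. }
  apply (modulus_level_by_halving r N T T_pos r_lt).
  apply Rlt_le, w_small; [apply Rlt_le, Rdiv_lt_0_compat; assumption|].
  apply (Rmult_lt_reg_r (2 ^ N)); [exact pow_pos|].
  replace (T / 2 ^ N * 2 ^ N) with T by (field; lra). lra.
Qed.

Section Scaling.
Variable h : R -> R.
Hypothesis h_homeo : increasing_homeomorphism h.
Hypothesis w_scale : forall s t, 0 <= s -> 0 <= t -> w (s * t) <= h s * w t.

(* Apply the scaling bound to 1 = s * (1/s) with h s small. *)
Lemma modulus_unbounded (r : R) : 0 < r -> exists T, 0 < T /\ r < w T.
Proof.
  intros r_pos.
  pose proof (modulus_pos 1 Rlt_0_1) as w1_pos.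
  destruct h_homeo as [h_nonneg [_ [h_cont _]]].
  destruct (cont_on_nonneg_small_near_0 h h_cont (increasing_homeomorphism_0 h h_homeo)
              h_nonneg (w 1 / (2 * r)) ltac:(apply Rdiv_lt_0_compat; lra))
    as [delta [delta_pos h_small]].
  set (s := delta / 2).
  assert (s_pos : 0 < s) by (unfold s; lra).
  exists (/ s). split; [apply Rinv_0_lt_compat; exact s_pos|].
  assert (w1_le := w_scale s (/ s) (Rlt_le _ _ s_pos) (Rlt_le _ _ (Rinv_0_lt_compat _ s_pos))).
  rewrite Rinv_r in w1_le by lra.
  assert (hs_lt := h_small s (Rlt_le _ _ s_pos) ltac:(unfold s; lra)).
  assert (wT_nonneg := modulus_nonneg (/ s) (Rlt_le _ _ (Rinv_0_lt_compat _ s_pos))).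
  assert (w 1 <= w 1 / (2 * r) * w (/ s)) by nra.
  assert (w 1 * (2 * r) <= w 1 * w (/ s)).
  { replace (w 1 * w (/ s)) with (w 1 / (2 * r) * w (/ s) * (2 * r)) by (field; lra).
    apply Rmult_le_compat_r; lra. }
  nra.
Qed.

(* Apply the scaling bound with s0 = h^-1 (1/4). *)
Lemma modulus_expansion : exists M, 0 < M /\ forall t, 0 <= t -> 4 * w t <= w (M * t).
Proof.
  destruct (increasing_homeomorphism_surjective h h_homeo (/ 4) ltac:(lra))
    as [s0 [s0_nonneg h_s0]].
  assert (s0_pos : 0 < s0).
  { destruct (Rle_lt_or_eq_dec _ _ s0_nonneg) as [lt|eq]; [exact lt|].
    rewrite <- eq, (increasing_homeomorphism_0 h h_homeo) in h_s0. lra. }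
  exists (/ s0). split; [apply Rinv_0_lt_compat; exact s0_pos|].
  intros t t_nonneg.
  assert (scale := w_scale s0 (/ s0 * t) s0_nonneg
                     ltac:(apply Rmult_le_pos; [apply Rlt_le, Rinv_0_lt_compat|]; lra)).
  replace (s0 * (/ s0 * t)) with t in scale by (field; lra).
  rewrite h_s0 in scale. lra.
Qed.

Lemma quasisymmetric_modulus_id (X : Type) (d : X -> X -> R) :
  (forall x y, 0 <= d x y) ->
  quasisymmetric d (fun x y => w (d x y)) (fun x : X => x).
Proof.
  intros d_nonneg. split; [exact (topological_embedding_modulus_id X d d_nonneg)|].
  exists h. split; [exact (increasing_homeomorphism_strict h h_homeo)|].
  split; [exact (proj1 h_homeo)|].
  split; [exact (increasing_homeomorphism_surjective h h_homeo)|].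
  intros x1 x2 x3 t t_nonneg d_le. eapply Rle_trans.
  - exact (modulus_le _ _ (d_nonneg x1 x2) d_le).
  - exact (w_scale t (d x1 x3) t_nonneg (d_nonneg x1 x3)).
Qed.

Lemma doubling_modulus_comp (X : Type) (d : X -> X -> R) (K : X -> Prop) :
  (forall x y, 0 <= d x y) -> doubling d K -> doubling (fun x y => w (d x y)) K.
Proof.
  intros d_nonneg [C cover_double].
  destruct modulus_expansion as [M [M_pos w_expand]].
  destruct (pow2_unbounded M) as [k M_lt].
  exists (C ^ k)%nat. intros x r Kx r_pos.
  destruct (modulus_level r r_pos (modulus_unbounded r r_pos)) as [b [b_pos [b_lo b_hi]]].
  destruct (doubling_iter X d K C cover_double k x b Kx b_pos) as [cs [cs_len [cs_K cs_cov]]].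
  exists cs. split; [exact cs_len|]. split; [exact cs_K|].
  intros y Ky w_lt.
  assert (d_lt : d x y < 2 ^ k * b).
  { destruct (Rlt_or_le (d x y) (M * b)) as [lt|ge]; [nra|].
    pose proof (w_expand b (Rlt_le _ _ b_pos)).
    pose proof (modulus_le (M * b) (d x y) ltac:(nra) ge). lra. }
  destruct (cs_cov y Ky d_lt) as [c [c_in d_cy]].
  exists c. split; [exact c_in|].
  pose proof (w_strict _ _ (d_nonneg c y) d_cy). lra.
Qed.

End Scaling.
End Modulus.

Theorem mainTheorem8 (w : R -> R) (X : Type) (d : X -> X -> R) :
  holder_like_modulus w -> is_metric d ->
  is_metric (fun x y => w (d x y)) /\
  quasisymmetric d (fun x y => w (d x y)) (fun x : X => x) /\
  (forall K : X -> Prop, doubling d K -> doubling (fun x y => w (d x y)) K).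
Proof.
  intros [w_0 [_ [w_strict [w_subadd [w_cont [h [h_homeo w_scale]]]]]]] d_metric.
  pose proof (proj1 d_metric) as d_nonneg.
  split; [|split].
  - exact (is_metric_modulus_comp w w_0 w_strict w_subadd X d d_metric).
  - exact (quasisymmetric_modulus_id w w_0 w_strict w_cont h h_homeo w_scale X d d_nonneg).
  - intros K. exact (doubling_modulus_comp w w_0 w_strict w_subadd w_cont h h_homeo w_scale X d K d_nonneg).
Qed.
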